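(* Let $\Psi:(\mathcal{D},\zeta)\to(QSym,\zeta_Q)$ be the unique morphism of combinatorial Hopf algebras. Then $\Psi([X])=U_X$ for every digraph $X$. Equivalently, for $X$ on vertex set $V$ with $|V|=n$ and every composition $\alpha$ of $n$, the coefficient of $M_\alpha$ in $U_X$ equals \[\zeta_\alpha([X])=\sum_{\substack{(V_1,\dots,V_k)\models V\\ \mathrm{type}=\alpha}}\zeta([X|_{V_1}])\cdots\zeta([X|_{V_k}]),\] and in particular equals $\mu_I(X)=\#\{\sigma\in\Sigma_V\mid X\mathrm{Des}(\sigma)\subset I\}$ where $\alpha=\mathrm{comp}(I)$.
   Context: A digraph $X=(V,E)$: $V$ finite, $E\subset\{(u,v)\in V\times V\mid u\ne v\}$; $X|_S$ is the induced subdigraph on $S$. $\mathcal{D}$ is the Hopf algebra over $\mathbb{Q}$ spanned by isomorphism classes of digraphs, graded by number of vertices, with product $[X][Y]=[X\cdot Y]$ (where $X\cdot Y$ is the disjoint union plus all edges from vertices of $X$ to vertices of $Y$) and coproduct $\Delta[X]=\sum_{S\subset V}[X|_S]\otimes[X|_{V\setminus S}]$. The character $\zeta$ is $\zeta([X])=\#\{\sigma\in\Sigma_V\mid X\mathrm{Des}(\sigma)=\emptyset\}$, where $\Sigma_V$ is the set of $V$-listings $\sigma=(\sigma_1,\dots,\sigma_n)$ and $X\mathrm{Des}(\sigma)=\{i\in[n-1]\mid(\sigma_i,\sigma_{i+1})\in E\}$. $QSym$ is the Hopf algebra of quasisymmetric functions with character $\zeta_Q(M_\alpha)=1$ if $\alpha$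 has at most one part and $0$ otherwise; $M_\alpha=\sum_{i_1<\cdots<i_k}x_{i_1}^{a_1}\cdots x_{i_k}^{a_k}$ for $\alpha=(a_1,\dots,a_k)$. The unique morphism is $\Psi(h)=\sum_{\alpha\models n}\zeta_\alpha(h)M_\alpha$ for $h\in\mathcal{D}_n$, with $\zeta_\alpha$ given by the displayed formula on digraphs. $\mathrm{comp}$ is the bijection from subsets $I=\{s_1<\dots<s_{k-1}\}\subset[n-1]$ to compositions $(s_1,s_2-s_1,\dots,n-s_{k-1})$. $F_I=\sum x_{i_1}\cdots x_{i_n}$ over $1\le i_1\le\cdots\le i_n$ with $i_j<i_{j+1}$ for $j\in I$; $U_X=\sum_{\sigma\in\Sigma_V}F_{X\mathrm{Des}(\sigma)}$ (the Redei–Berge symmetric function). *)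

From HB Require Import structures.
From mathcomp Require Import all_boot all_order all_algebra.
From mathcomp Require Import mpoly.
Set Implicit Arguments. Unset Strict Implicit. Unset Printing Implicit Defensive.
Import GRing.Theory.
Local Open Scope ring_scope.

Section Digraph.
Variables (V : finType) (E : rel V).

Definition listings : {set #|V|.-tuple V} := [set t : #|V|.-tuple V | uniq (tval t)].

(* XDes(s) = { i in [n-1] | (s_i, s_{i+1}) in E }  (1-indexed positions). *)
Definition XDes (s : seq V) : seq nat :=
  [seq p.1.+1 | p <- zip (iota 0 (size s)) (zip s (behead s)) & E p.2.1 p.2.2].

Definition zeta : nat := #|[set t in listings | XDes t == [::]]|.

Definition mu (I : seq nat) : nat :=
  #|[set t in listings | all (fun i => i \in I) (XDes t)]|.
End Digraph.

Definition induced (V : finType) (E : rel V) (S : {set V}) : rel {x : V | x \in S} :=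
  fun x y => E (val x) (val y).

Definition zeta_alpha (V : finType) (E : rel V) (alpha : seq nat) : nat :=
  \sum_(B : {ffun 'I_(size alpha) -> {set V}} |
          [&& [forall i, forall j, (i != j) ==> [disjoint B i & B j]],
              \bigcup_i B i == [set: V] &
              [forall i, #|B i| == nth 0 alpha i]])
     \prod_(i < size alpha) @zeta _ (@induced V E (B i)).

(* comp^{-1}: the subset I = {s_1 < ... < s_{k-1}} of [n-1] of partial sums *)
Definition comp_set (alpha : seq nat) : seq nat :=
  [seq sumn (take i alpha) | i <- iota 1 (size alpha).-1].

(* Fundamental quasisymmetric function F_I of degree n, in the N variables
   x_1..x_N (encoded 'X_0..'X_(N-1)):
   sum over 1 <= i_1 <= ... <= i_n <= N with i_j < i_(j+1) for j in I. *)
Definition F_poly (N n : nat) (I : seq nat) : {mpoly rat[N]} :=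
  \sum_(w : n.-tuple 'I_N |
          sorted leq (map val w) &&
          all (fun j => (nth 0 (map val w) j.-1 < nth 0 (map val w) j)%N) I)
     \prod_(j <- w) 'X_j.

Definition U_poly (V : finType) (E : rel V) (N : nat) : {mpoly rat[N]} :=
  \sum_(t in listings V) F_poly N #|V| (XDes E t).

Definition mono_of (N : nat) (alpha : seq nat) : 'X_{1.. N} :=
  [multinom nth 0%N alpha i | i < N].

(* coefficient of M_alpha in U_X: for a quasisymmetric function this is the
   coefficient of the monomial x_1^{a_1} ... x_k^{a_k}; computed in N = |V|
   variables (enough, since k <= n). *)
Definition coeffM_U (V : finType) (E : rel V) (alpha : seq nat) : rat :=
  (U_poly E #|V|)@_(mono_of #|V| alpha).

(* In F_I, the coefficient of
   x_1^{a_1} ... x_k^{a_k} counts weakly increasing words of content alpha with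
   strict ascents at every position of I; the only word of content alpha is the
   block word 1^{a_1} 2^{a_2} ... k^{a_k}, whose ascents are exactly comp^{-1}(alpha).
   Hence the coefficient of M_alpha in U_X is mu_{comp^{-1}(alpha)}(X).  Conversely,
   cutting a listing whose descents lie in comp^{-1}(alpha) at those positions
   gives an ordered set composition (V_1, ..., V_k) of type alpha together with a
   descent-free listing of each X|_{V_i}, and this correspondence is bijective,
   so mu_{comp^{-1}(alpha)}(X) = zeta_alpha([X]). *)

From HB Require Import structures.
From mathcomp Require Import all_boot all_order all_algebra.
From mathcomp Require Import mpoly.

Set Implicit Arguments.
Unset Strict Implicit.
Unset Printing Implicit Defensive.

Import GRing.Theory.

Section Descents.
Variables (T : Type) (E : rel T).

Definition xdes_from (k : nat) (s : seq T) : seq nat :=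
  [seq p.1.+1 | p <- zip (iota k (size s)) (zip s (behead s)) & E p.2.1 p.2.2].

Lemma xdes_from_cons2 k x y s :
  xdes_from k [:: x, y & s] =
  (if E x y then [:: k.+1] else [::]) ++ xdes_from k.+1 (y :: s).
Proof. by rewrite /xdes_from /=; case: (E x y). Qed.

Lemma xdes_fromE k s : xdes_from k s = map (addn k) (xdes_from 0 s).
Proof.
elim: s k => [|x s IH] k //; case: s IH => [|y s] IH //.
rewrite !xdes_from_cons2 map_cat IH [xdes_from 1 _]IH -map_comp.
congr (_ ++ _); first by case: (E x y) => //=; rewrite addn1.
by apply: eq_map => i /=; rewrite addnA addn1 addSnnS.
Qed.

Lemma xdes_from_cat k x s1 y s2 :
  xdes_from k ((x :: s1) ++ (y :: s2)) =
  xdes_from k (x :: s1) ++ (if E (last x s1) y then [:: k + (size s1).+1] else [::])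
    ++ xdes_from (k + (size s1).+1) (y :: s2).
Proof.
elim: s1 x k => [|z s1 IH] x k /=; first by rewrite xdes_from_cons2 addn1.
by rewrite xdes_from_cons2 IH xdes_from_cons2 -!catA !addSnnS.
Qed.

Lemma xdes_from_bound k s : all (fun i => k < i < k + size s) (xdes_from k s).
Proof.
elim: s k => [|x s IH] k //; case: s IH => [|y s] IH //.
rewrite xdes_from_cons2 all_cat; apply/andP; split.
  by case: (E x y) => //=; rewrite ltnSn addnS ltnS -addn1 leq_add2l.
apply: sub_all (IH k.+1) => i /andP[ki ik].
by rewrite ltnW //= addnS -addSn.
Qed.

End Descents.

Lemma xdes_from_map (T U : Type) (E : rel T) (F : rel U) (f : U -> T) k s :
  (forall x y, F x y = E (f x) (f y)) -> xdes_from E k (map f s) = xdes_from F k s.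
Proof.
move=> EF; elim: s k => [|x s IH] k //; case: s IH => [|y s] IH //=.
by rewrite !xdes_from_cons2 -IH EF.
Qed.

Section Listings.
Variable T : finType.

Lemma card_listingsE (P : pred (seq T)) :
  #|[set t in listings T | P t]| = count P (permutations (enum T)).
Proof.
set L := [seq tval t | t <- enum [set t in listings T | P t]].
have -> : #|[set t in listings T | P t]| = size L by rewrite size_map cardE.
rewrite -size_filter; apply/perm_size/uniq_perm.
- by rewrite map_inj_uniq ?enum_uniq //; exact: val_inj.
- by rewrite filter_uniq // permutations_uniq.
move=> s; rewrite mem_filter mem_permutations; apply/mapP/andP.
  case=> t; rewrite mem_enum !inE => /andP[Ut Pt] ->; split=> //.
  apply: uniq_perm => //; first exact: enum_uniq.
  have Hsz : size (enum T) <= size t by rewrite size_tuple cardE.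
  by have [_] := uniq_min_size Ut (fun x _ => mem_enum _ x) Hsz.
case=> Ps Hp; have Hs : size s == #|T| by rewrite (perm_size Hp) cardE.
exists (Tuple Hs) => //.
by rewrite mem_enum !inE /= (perm_uniq Hp) enum_uniq Ps.
Qed.

Lemma perm_enum_sub (S : {set T}) :
  perm_eq (map val (enum {: {x : T | x \in S}})) (enum S).
Proof.
apply: uniq_perm; first by rewrite map_inj_uniq ?enum_uniq //; exact: val_inj.
  exact: enum_uniq.
move=> x; rewrite mem_enum; apply/mapP/idP => [[y _ ->] | xS]; first exact: valP.
by exists (Sub x xS); rewrite ?mem_enum.
Qed.

Lemma count_permutations_sub (S : {set T}) (P : pred (seq T)) :
  count (fun t => P (map val t)) (permutations (enum {: {x : T | x \in S}}))
  = count P (permutations (enum S)).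
Proof.
rewrite -(count_map (map val) P); apply/permP/uniq_perm.
- by rewrite map_inj_uniq ?permutations_uniq //; apply/inj_map/val_inj.
- exact: permutations_uniq.
have valK s : all (fun x => x \in S) s ->
    map val (pmap (insub : T -> option {x | x \in S}) s) = s.
  move=> sS; rewrite (pmap_filter (@insubK _ _ _)); apply/all_filterP.
  by apply: sub_all sS => x; rewrite /= isSome_insub.
move=> s; rewrite mem_permutations; apply/mapP/idP.
  case=> t; rewrite mem_permutations => Ht ->.
  exact: perm_trans (perm_map val Ht) (perm_enum_sub S).
move=> Hp; have sS : all (fun x => x \in S) s.
  by apply/allP => x; rewrite (perm_mem Hp) mem_enum.
exists (pmap insub s); last by rewrite valK.
rewrite mem_permutations; apply: (perm_map_inj val_inj); rewrite valK //.
by apply: (perm_trans Hp); rewrite perm_sym perm_enum_sub.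
Qed.

End Listings.

Lemma count_sum_fibers (T : eqType) (K : finType) (s : seq T) (R : pred T)
    (f : T -> K) (C : pred K) :
  all (fun t => C (f t)) s ->
  count R s = \sum_(k | C k) count (fun t => R t && (f t == k)) s.
Proof.
elim: s => [|x s IH] /=; first by rewrite big1.
move=> /andP[Cx Hs]; rewrite IH // big_split /=; congr (_ + _).
rewrite (bigD1 (f x)) //= eqxx andbT big1 ?addn0 // => k /andP[_ /negbTE].
by rewrite eq_sym => ->; rewrite andbF.
Qed.

Lemma count_allpairs_cat (T : eqType) (a : nat) (P Q : pred (seq T)) s t :
  all (fun x => size x == a) s ->
  count (fun z => P (take a z) && Q (drop a z)) [seq x ++ y | x <- s, y <- t]
  = count P s * count Q t.
Proof.
elim: s => [|x s IH] //= /andP[/eqP Hx Hs].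
rewrite count_cat IH // count_map mulnDl; congr (_ + _).
rewrite (@eq_count _ _ (fun y => P x && Q y)); last first.
  by move=> y /=; rewrite take_size_cat // drop_size_cat.
by case: (P x) => /=; rewrite ?mul1n ?mul0n ?count_pred0.
Qed.

Section SplitPermutations.
Variables (T : finType) (U B : {set T}).
Hypothesis sBU : B \subset U.

Let a := #|B|.

Lemma perm_permutations_split :
  perm_eq [seq t <- permutations (enum U) | [set x in take a t] == B]
          [seq x ++ y | x <- permutations (enum B), y <- permutations (enum (U :\: B))].
Proof.
apply: uniq_perm.
- by rewrite filter_uniq // permutations_uniq.
- apply: allpairs_uniq; rewrite ?permutations_uniq //.
  move=> [x1 y1] [x2 y2] /allpairsP[[u v] [/= H1 _ [-> ->]]].
  move=> /allpairsP[[u' v'] [/= H2 _ [-> ->]]] /= /eqP.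
  rewrite mem_permutations in H1; rewrite mem_permutations in H2.
  by rewrite eqseq_cat ?(perm_size H1) ?(perm_size H2) // => /andP[/eqP -> /eqP ->].
move=> z; rewrite mem_filter mem_permutations; apply/andP/allpairsP.
  case=> /eqP Bz Hz; exists (take a z, drop a z); rewrite /= cat_take_drop.
  have Uz : uniq z by rewrite (perm_uniq Hz) enum_uniq.
  have /and3P[Ut Hd Ud] : [&& uniq (take a z), ~~ has (mem (take a z)) (drop a z)
                            & uniq (drop a z)] by rewrite -cat_uniq cat_take_drop.
  split=> //; rewrite mem_permutations; apply: uniq_perm => //; try exact: enum_uniq.
    by move=> x; rewrite mem_enum -Bz inE.
  move=> x; rewrite mem_enum !inE -Bz inE -(mem_enum U) -(perm_mem Hz).
  rewrite -[in x \in z](cat_take_drop a z) mem_cat.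
  case Hxd: (x \in drop a z); last by rewrite orbF andNb.
  rewrite orbT andbT; apply/esym/negP => Hxt; case/negP: Hd; apply/hasP.
  by exists x.
case=> [[x y] [/= Hx Hy ->]].
rewrite mem_permutations in Hx; rewrite mem_permutations in Hy.
rewrite take_size_cat ?(perm_size Hx) -?cardE //; split.
  by apply/eqP/setP => w; rewrite inE (perm_mem Hx) mem_enum.
apply: uniq_perm; last 2 first.
- exact: enum_uniq.
- move=> w; rewrite mem_cat (perm_mem Hx) (perm_mem Hy) !mem_enum !inE.
  by case Hw: (w \in B) => //=; rewrite (subsetP sBU).
rewrite cat_uniq (perm_uniq Hx) (perm_uniq Hy) !enum_uniq /= andbT.
apply/hasP => -[w]; rewrite (perm_mem Hy) (perm_mem Hx) !mem_enum !inE.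
by case/andP => /negbTE ->.
Qed.

End SplitPermutations.

Lemma count_permutations_split (T : finType) (U : {set T}) (a : nat)
    (P Q : pred (seq T)) :
  a <= #|U| ->
  count (fun t => P (take a t) && Q (drop a t)) (permutations (enum U)) =
  \sum_(B : {set T} | (B \subset U) && (#|B| == a))
     count P (permutations (enum B)) * count Q (permutations (enum (U :\: B))).
Proof.
move=> aU.
rewrite (@count_sum_fibers _ _ _ _ (fun t => [set x in take a t])
           (fun B => (B \subset U) && (#|B| == a))); last first.
  apply/allP => t; rewrite mem_permutations => Ht.
  have Ut : uniq t by rewrite (perm_uniq Ht) enum_uniq.
  apply/andP; split.
    by apply/subsetP => x; rewrite inE => /mem_take; rewrite (perm_mem Ht) mem_enum.
  rewrite cardsE (card_uniqP (take_uniq a Ut)) size_take (perm_size Ht) -cardE.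
  by case: ltngtP aU => // ->.
apply: eq_bigr => B /andP[BU /eqP <-].
rewrite -count_filter -(@count_allpairs_cat _ #|B| P Q).
  exact/permP/perm_permutations_split.
by apply/allP => x; rewrite mem_permutations => /perm_size ->; rewrite -cardE.
Qed.

Definition ffun_cons (T : Type) k (p : T * {ffun 'I_k -> T}) : {ffun 'I_k.+1 -> T} :=
  [ffun i => if unlift ord0 i is Some j then p.2 j else p.1].

Section FfunCons.
Variables (T : Type) (k : nat).
Implicit Type p : T * {ffun 'I_k -> T}.

Lemma ffun_cons0 p : ffun_cons p ord0 = p.1.
Proof. by rewrite ffunE unlift_none. Qed.

Lemma ffun_consS p j : ffun_cons p (lift ord0 j) = p.2 j.
Proof. by rewrite ffunE liftK. Qed.

Lemma ffun_cons_bij : bijective (@ffun_cons T k).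
Proof.
exists (fun f : {ffun 'I_k.+1 -> T} => (f ord0, [ffun j : 'I_k => f (lift ord0 j)])).
  move=> [x g]; rewrite ffun_cons0; congr (_, _).
  by apply/ffunP => j; rewrite ffunE ffun_consS.
move=> f; apply/ffunP => i; case: (unliftP ord0 i) => [j ->|->].
  by rewrite ffun_consS ffunE.
by rewrite ffun_cons0.
Qed.

End FfunCons.

Definition is_set_comp (T : finType) (U : {set T}) (alpha : seq nat)
    (B : {ffun 'I_(size alpha) -> {set T}}) : bool :=
  [&& [forall i, forall j, (i != j) ==> [disjoint B i & B j]],
      \bigcup_i B i == U &
      [forall i, #|B i| == nth 0 alpha i]].

Arguments is_set_comp {T} U alpha B.

Section SetCompositions.
Variable T : finType.

Lemma is_set_comp_nil (U : {set T}) B : is_set_comp U [::] B = (U == set0).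
Proof.
rewrite /is_set_comp big_ord0 eq_sym.
by apply/and3P/idP => [[] // | UE]; split=> //; apply/forallP => -[].
Qed.

Lemma pairwise_disjoint_ffun_cons k (x : {set T}) (g : {ffun 'I_k -> {set T}}) :
  [forall i, forall j, (i != j) ==> [disjoint ffun_cons (x, g) i & ffun_cons (x, g) j]]
  = [disjoint x & \bigcup_i g i] &&
    [forall i, forall j, (i != j) ==> [disjoint g i & g j]].
Proof.
apply/idP/andP.
  move=> /forallP H; split.
    apply/bigcup_disjointP => j _; have := forallP (H ord0) (lift ord0 j).
    by rewrite neq_lift ffun_cons0 ffun_consS.
  apply/forallP => i; apply/forallP => j; apply/implyP => ij.
  have := forallP (H (lift ord0 i)) (lift ord0 j).
  by rewrite (inj_eq (@lift_inj _ ord0)) ij !ffun_consS.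
case=> /bigcup_disjointP Dx /forallP Dg; apply/forallP => i; apply/forallP => j.
apply/implyP; case: (unliftP ord0 i) => [i' ->|->]; case: (unliftP ord0 j) => [j' ->|->].
- rewrite (inj_eq (@lift_inj _ ord0)) !ffun_consS => ij.
  exact: (implyP (forallP (Dg i') j')).
- by rewrite ffun_consS ffun_cons0 disjoint_sym => _; apply: Dx.
- by rewrite ffun_consS ffun_cons0 => _; apply: Dx.
- by rewrite eqxx.
Qed.

Lemma disjoint_setU_eq (x G U : {set T}) :
  ([disjoint x & G] && (x :|: G == U)) = (x \subset U) && (G == U :\: x).
Proof.
apply/andP/andP => [[D /eqP <-]|[xU /eqP ->]]; split.
- exact: subsetUl.
- apply/eqP/setP => v; rewrite !inE; case vx: (v \in x) => //=.
  by rewrite (disjointFr D vx).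
- by rewrite disjoints_subset; apply/subsetP => v vx; rewrite !inE vx.
- apply/eqP/setP => v; rewrite !inE; case vx: (v \in x) => //=.
  by rewrite (subsetP xU).
Qed.

Lemma is_set_comp_cons (U : {set T}) a al x g :
  is_set_comp U (a :: al) (ffun_cons (x, g)) =
  (x \subset U) && (#|x| == a) && is_set_comp (U :\: x) al g.
Proof.
have cup_cons : \bigcup_(i < (size al).+1) ffun_cons (x, g) i = x :|: \bigcup_i g i.
  rewrite big_ord_recl ffun_cons0; congr (_ :|: _).
  by apply: eq_bigr => i _; rewrite ffun_consS.
have card_cons : [forall i, #|ffun_cons (x, g) i| == nth 0 (a :: al) i] =
    (#|x| == a) && [forall i, #|g i| == nth 0 al i].
  apply/forallP/andP => [H | [xa /forallP Hg] i].
    split; first by have := H ord0; rewrite ffun_cons0.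
    by apply/forallP => i; have := H (lift ord0 i); rewrite ffun_consS lift0.
  by case: (unliftP ord0 i) => [i' ->|->]; rewrite ?ffun_consS ?lift0 ?ffun_cons0.
rewrite /is_set_comp pairwise_disjoint_ffun_cons cup_cons card_cons.
have := disjoint_setU_eq x (\bigcup_i g i) U.
by case: [disjoint x & _]; case: (_ :|: _ == U); case: (x \subset U);
  case: (_ == U :\: x); case: (#|x| == a); case: [forall i, forall j, _];
  case: [forall i, #|g i| == _].
Qed.

End SetCompositions.

Section ZetaAlpha.
Variables (V : finType) (E : rel V).

Definition zeta_alpha_on (U : {set V}) (alpha : seq nat) : nat :=
  \sum_(B | is_set_comp U alpha B) \prod_(i < size alpha) zeta (@induced V E (B i)).

Lemma zeta_alphaE alpha : zeta_alpha E alpha = zeta_alpha_on [set: V] alpha.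
Proof. by []. Qed.

Lemma zeta_alpha_on_nil U : zeta_alpha_on U [::] = (U == set0).
Proof.
rewrite /zeta_alpha_on (eq_bigl _ _ (is_set_comp_nil U)).
case: (U == set0); last by rewrite big_pred0_eq.
by rewrite (eq_bigr (fun=> 1)) ?sum1_card ?card_ffun ?card_ord // => B _; rewrite big_ord0.
Qed.

Lemma zeta_alpha_on_cons U a al :
  zeta_alpha_on U (a :: al) =
  \sum_(B : {set V} | (B \subset U) && (#|B| == a))
     zeta (@induced V E B) * zeta_alpha_on (U :\: B) al.
Proof.
rewrite /zeta_alpha_on /= (reindex (@ffun_cons _ (size al))) /=; last first.
  exact/onW_bij/ffun_cons_bij.
rewrite (eq_bigl _ _ (fun p => is_set_comp_cons U a p.1 p.2)) /=.
rewrite (eq_bigr (fun p : {set V} * {ffun 'I_(size al) -> {set V}} =>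
    zeta (@induced V E p.1) * \prod_(i < size al) zeta (@induced V E (p.2 i)))); last first.
  move=> [x g] _; rewrite big_ord_recl ffun_cons0; congr (_ * _).
  by apply: eq_bigr => i _; rewrite ffun_consS.
rewrite -(pair_big_dep (fun x : {set V} => (x \subset U) && (#|x| == a))
           (fun x (g : {ffun 'I_(size al) -> {set V}}) => is_set_comp (U :\: x) al g)
           (fun x g => zeta (@induced V E x) *
                       \prod_(i < size al) zeta (@induced V E (g i)))).
by apply: eq_bigr => x _; rewrite big_distrr.
Qed.

End ZetaAlpha.

Lemma comp_set_cons a b al :
  comp_set (a :: b :: al) = a :: map (addn a) (comp_set (b :: al)).
Proof.
rewrite /comp_set /= addn0 -map_comp; congr (_ :: _).
by rewrite -[2]/(1 + 1) iotaDl -map_comp.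
Qed.

Lemma all_mem_nil_ub (l C : seq nat) a :
  all (fun i => i < a) l -> all (fun c => a <= c) C ->
  all (fun i => i \in C) l = (l == [::]).
Proof.
case: l => [|i l] //= /andP[ia _] HC; apply/negbTE/negP => /andP[iC _].
by have := allP HC i iC; rewrite leqNgt ia.
Qed.

Section DescentCounting.
Variables (V : finType) (E : rel V).

Definition xdes_subset (I : seq nat) (t : seq V) : bool :=
  all (fun i => i \in I) (xdes_from E 0 t).

Definition mu_on (U : {set V}) (I : seq nat) : nat :=
  count (xdes_subset I) (permutations (enum U)).

Lemma mu_onT I : mu E I = mu_on [set: V] I.
Proof.
have /perm_permutations/permP permT : perm_eq (enum V) (enum [set: V]).
  by apply: uniq_perm; rewrite ?enum_uniq // => x; rewrite !mem_enum !inE.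
by rewrite /mu (card_listingsE (xdes_subset I)) permT.
Qed.

Lemma zeta_inducedE (B : {set V}) :
  zeta (@induced V E B) = count (fun t => xdes_from E 0 t == [::]) (permutations (enum B)).
Proof.
rewrite /zeta (card_listingsE (fun s => XDes (@induced V E B) s == [::])).
rewrite -count_permutations_sub; apply: eq_count => t /=.
by rewrite (@xdes_from_map _ _ E (@induced V E B) val).
Qed.

Lemma xdes_subset_cat a b al t1 t2 : 0 < a -> size t1 = a -> t2 != [::] ->
  xdes_subset (comp_set (a :: b :: al)) (t1 ++ t2) =
  (xdes_from E 0 t1 == [::]) && xdes_subset (comp_set (b :: al)) t2.
Proof.
case: t1 => [|x s1] a0 Hs; first by rewrite -Hs in a0.
case: t2 => [|y s2] // _.
rewrite /xdes_subset xdes_from_cat !all_cat comp_set_cons.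
set C := comp_set (b :: al).
rewrite (@all_mem_nil_ub _ _ a); first last.
- by rewrite /= leqnn; apply/allP => c /mapP[d _ ->]; rewrite leq_addr.
- by apply: sub_all (xdes_from_bound E 0 (x :: s1)) => i /andP[_]; rewrite add0n Hs.
congr (_ && _); rewrite add0n -[(size s1).+1]/(size (x :: s1)) Hs.
have -> : all (fun i => i \in a :: map (addn a) C)
    (if E (last x s1) y then [:: a] else [::]) by case: ifP; rewrite /= ?inE ?eqxx.
rewrite /= xdes_fromE all_map; apply: eq_in_all => i Hi /=.
have /andP[i0 _] := allP (xdes_from_bound E 0 (y :: s2)) i Hi.
rewrite in_cons (mem_map (@addnI a)).
by rewrite -{2}[a]addn0 eqn_add2l (gtn_eqF i0).
Qed.

Lemma zeta_alpha_on_mu alpha (U : {set V}) :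
  all (fun a => 0 < a) alpha -> #|U| = sumn alpha ->
  zeta_alpha_on E U alpha = mu_on U (comp_set alpha).
Proof.
elim: alpha U => [|a al IH] U /=.
  move=> _ /eqP; rewrite cards_eq0 zeta_alpha_on_nil => /eqP ->.
  by rewrite eqxx /mu_on enum_set0.
move=> /andP[a0 al_pos] cardU; rewrite zeta_alpha_on_cons.
case: al IH al_pos cardU => [|b al] IH al_pos cardU.
  rewrite addn0 in cardU; rewrite (eq_bigl (fun B => B == U)); last first.
    move=> B; apply/andP/eqP => [[BU /eqP Ba] | ->]; last by rewrite subxx cardU.
    by apply/eqP; rewrite eqEcard BU cardU Ba leqnn.
  rewrite big_pred1_eq setDv zeta_alpha_on_nil eqxx muln1 zeta_inducedE.
  by apply: eq_count => t; rewrite /xdes_subset; case: (xdes_from E 0 t).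
under eq_bigr => B /andP[BU /eqP Ba].
  rewrite zeta_inducedE IH ?cardsD ?(setIidPr BU) ?Ba ?cardU ?addKn //.
over.
rewrite -count_permutations_split; last by rewrite cardU leq_addr.
apply: eq_in_count => t; rewrite mem_permutations => /perm_size st.
rewrite -cardE cardU in st.
have [b0 _] := andP al_pos.
rewrite -[in RHS](cat_take_drop a t) xdes_subset_cat //.
  by rewrite size_takel // st leq_addr.
by rewrite -size_eq0 size_drop st addKn /= -lt0n (leq_trans b0) // leq_addr.
Qed.

End DescentCounting.

Section BlockSequence.

Fixpoint block_seq (c : nat) (alpha : seq nat) : seq nat :=
  if alpha is a :: al then nseq a c ++ block_seq c.+1 al else [::].

Lemma size_block_seq c alpha : size (block_seq c alpha) = sumn alpha.
Proof. by elim: alpha c => [|a al IH] c //=; rewrite size_cat size_nseq IH. Qed.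

Lemma count_block_seq c alpha x :
  count_mem x (block_seq c alpha) = if c <= x then nth 0 alpha (x - c) else 0.
Proof.
elim: alpha c => [|a al IH] c /=; first by case: ifP; rewrite ?nth_nil.
rewrite count_cat count_nseq IH /=.
case: (ltngtP c x) => [cx|xc|->]; rewrite ?mul0n ?add0n //.
- by rewrite -(subnSK cx).
- by rewrite mul1n subnn addn0.
Qed.

Lemma sorted_block_seq c alpha : sorted leq (block_seq c alpha).
Proof.
suff path_block d : d <= c -> path leq d (block_seq c alpha).
  exact: path_sorted (path_block _ (leq0n c)).
elim: alpha c d => [|a al IH] c d //= dc.
rewrite cat_path; apply/andP; split.
  by elim: a d dc {IH} => [|a IHa] d dc //=; rewrite dc (IHa c (leqnn c)).
apply: IH; case: a => [|a] //=; first exact: leqW.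
by rewrite (_ : last c (nseq a c) = c) //; elim: a.
Qed.

Lemma block_seq_bound c alpha : all (fun x => x < c + size alpha) (block_seq c alpha).
Proof.
elim: alpha c => [|a al IH] c //=; rewrite all_cat; apply/andP; split.
  by apply/allP => x /nseqP[-> _]; rewrite -addn1 leq_add2l.
by apply: sub_all (IH c.+1) => x; rewrite addSnnS.
Qed.

Lemma block_seq_ascent c alpha j : all (fun a => 0 < a) alpha -> 0 < j < sumn alpha ->
  (nth 0 (block_seq c alpha) j.-1 < nth 0 (block_seq c alpha) j) = (j \in comp_set alpha).
Proof.
elim: alpha c j => [|a al IH] c j /=; first by rewrite ltn0 andbF.
move=> /andP[a0 al_pos] /andP[j0 ja].
rewrite !nth_cat !size_nseq !nth_nseq.
case: al IH al_pos ja => [|b al] IH al_pos ja.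
  by rewrite /= addn0 in ja; rewrite ja (leq_ltn_trans (leq_pred j) ja) ltnn.
rewrite comp_set_cons in_cons.
case: (ltngtP j a) => [ja'|aj|->].
- rewrite (leq_ltn_trans (leq_pred j) ja') ltnn /=; apply/esym/negbTE/negP.
  by case/mapP => y _ jy; move: ja'; rewrite jy ltnNge leq_addr.
- have -> : (j.-1 < a) = false by rewrite -ltnS prednK // ltnNge aj.
  have -> : j.-1 - a = (j - a).-1 by rewrite -subn1 -subnDA addnC subnDA subn1.
  have ja_range : 0 < j - a < sumn (b :: al).
    by rewrite subn_gt0 aj /= -(ltn_add2l a) (subnKC (ltnW aj)).
  by rewrite /= IH // -{2}(subnKC (ltnW aj)) (mem_map (@addnI a)).
- rewrite ltn_predL a0 subnn.
  by case/andP: al_pos; clear IH ja; case: b => [|b] //= _; rewrite ltnSn.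
Qed.

Lemma block_seq_eq (s alpha : seq nat) :
  sorted leq s -> (forall x, count_mem x s = nth 0 alpha x) -> s = block_seq 0 alpha.
Proof.
move=> s_sorted s_count.
apply: (sorted_eq leq_trans anti_leq) => //; first exact: sorted_block_seq.
by apply/allP => x _ /=; rewrite s_count count_block_seq subn0.
Qed.

End BlockSequence.

Section FundamentalCoefficient.
Local Open Scope ring_scope.
Variable N : nat.

Lemma prod_mpolyX (w : seq 'I_N) :
  \prod_(j <- w) ('X_j : {mpoly rat[N]}) = 'X_[(\sum_(j <- w) U_(j))%MM].
Proof. by have := @mpolyX_prod N rat (map (fun j => U_(j)%MM) w) xpredT; rewrite !big_map. Qed.

Lemma mnm_sum_count (w : seq 'I_N) (i : 'I_N) :
  (\sum_(j <- w) U_(j))%MM i = count_mem (val i) (map val w).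
Proof.
rewrite mnm_sumE; elim: w => [|j w IH]; first by rewrite big_nil.
by rewrite big_cons IH mnm1E.
Qed.

Lemma F_poly_coeff n I alpha :
  all (fun a => 0 < a)%N alpha -> sumn alpha = n -> (size alpha <= N)%N ->
  all (fun j => 0 < j < n)%N I ->
  (F_poly N n I)@_(mono_of N alpha) = (all (fun j => j \in comp_set alpha) I)%:R.
Proof.
move=> alpha_pos alpha_sum alpha_N I_range.
pose s0 := block_seq 0 alpha.
have s0_N : all (fun x => x < N)%N s0.
  by apply: sub_all (block_seq_bound 0 alpha) => x /leq_trans; apply.
have [w0 w0E] : {w0 : n.-tuple 'I_N | map val w0 = s0}.
  have valK : map val (pmap insub s0 : seq 'I_N) = s0.
    rewrite (pmap_filter (@insubK _ _ _)); apply/all_filterP.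
    by apply: sub_all s0_N => x; rewrite isSome_insub.
  have w0_size : size (pmap insub s0 : seq 'I_N) == n.
    by rewrite -(size_map val) valK size_block_seq alpha_sum.
  by exists (Tuple w0_size).
have mono_w0 (w : n.-tuple 'I_N) : sorted leq (map val w) ->
    ((\sum_(j <- w) U_(j))%MM == mono_of N alpha) = (w == w0).
  move=> w_sorted; apply/eqP/eqP => [w_mono | ->]; last first.
    by apply/mnmP => i; rewrite mnm_sum_count mnmE w0E count_block_seq subn0.
  apply/val_inj/(inj_map val_inj); rewrite w0E; apply: block_seq_eq => // x.
  have [xN | Nx] := ltnP x N.
    by rewrite -[x]/(val (Ordinal xN)) -mnm_sum_count w_mono mnmE.
  rewrite nth_default ?(leq_trans alpha_N) //; apply/count_memPn/mapP => -[j _ xj].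
  by move: (ltn_ord j); rewrite -xj ltnNge Nx.
have s0_ascents : all (fun j => nth 0 s0 j.-1 < nth 0 s0 j)%N I
    = all (fun j => j \in comp_set alpha) I.
  apply: eq_in_all => j jI; rewrite block_seq_ascent //.
  by rewrite alpha_sum; exact: (allP I_range).
rewrite /F_poly raddf_sum /=.
under eq_bigr => w /andP[w_sorted _] do rewrite prod_mpolyX mcoeffX mono_w0 //.
rewrite big_mkcond (bigD1 w0) //= eqxx big1 ?addr0 => [|w /negbTE ->]; last by case: ifP.
by rewrite w0E sorted_block_seq s0_ascents; case: all.
Qed.

End FundamentalCoefficient.

Lemma size_le_sumn (alpha : seq nat) :
  all (fun a => 0 < a) alpha -> size alpha <= sumn alpha.
Proof. by elim: alpha => [|a al IH] //= /andP[a0 /IH]; rewrite -add1n; apply: leq_add. Qed.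

Local Open Scope ring_scope.

Theorem mainTheorem9 (V : finType) (E : rel V) (Eirr : irreflexive E)
  (alpha : seq nat) (alpha_pos : all (fun a => 0 < a)%N alpha)
  (alpha_sum : sumn alpha = #|V|) :
  coeffM_U E alpha = (zeta_alpha E alpha)%:R /\
  coeffM_U E alpha = (mu E (comp_set alpha))%:R.
Proof.
have mu_zeta : mu E (comp_set alpha) = zeta_alpha E alpha.
  by rewrite mu_onT zeta_alphaE zeta_alpha_on_mu // cardsT.
suff -> : coeffM_U E alpha = (mu E (comp_set alpha))%:R by rewrite mu_zeta.
rewrite /coeffM_U /U_poly raddf_sum /= /mu -sum1dep_card natr_sum big_mkcondr /=.
apply: eq_bigr => t _; rewrite F_poly_coeff //.
- by case: all.
- by rewrite -alpha_sum size_le_sumn.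
- by have := xdes_from_bound E 0 t; rewrite add0n size_tuple.
Qed.
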